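(* Every Stackelberg game $(G,L,F)$ admits an SCE and an SCE-PA, i.e. $\mathbf{X}^{SCE}\neq\emptyset$ and $\mathbf{X}^{SCE\text{-}PA}\neq\emptyset$.
   Context: A finite game is $G=(N,\{S_p\}_{p\in N},\{u_p\}_{p\in N})$ with players $N=\{1,\dots,n\}$, finite nonempty strategy sets $S_p$, and utilities $u_p:S\to\mathbb{R}$ on $S=\prod_{p\in N}S_p$; write $s=(s_p,s_{-p})$ with $s_{-p}\in S_{-p}=\prod_{q\neq p}S_q$. $\mathcal{X}=\Delta(S)$ is the set of probability distributions on $S$ and $u_p(x)=\sum_{s\in S}x(s)u_p(s)$ for $x\in\mathcal{X}$. For $P\subseteq N$, $\mathcal{X}^{CE}_P$ is the set of $x\in\mathcal{X}$ such that for every $p\in P$ and all $s_p\neq s_p'\in S_p$: $\sum_{s_{-p}\in S_{-p}} x(s_p,s_{-p})\,(u_p(s_p,s_{-p})-u_p(s_p',s_{-p}))\ge 0$; $\mathcal{X}^{CE}=\mathcal{X}^{CE}_N$ is the set of correlated equilibria of $G$. A Stackelberg game (SG) is a triple $(G,L,F)$ with $L\cup F=N$ and $L\cap F=\emptyset$ (leaders and followers). For $P\subseteq N$, $\Pi_P$ is the set of ordered subsets of $P$ (finite sequences of pairwise distinct elements of $P$, including the empty sequence $\varnothing$); for $\pi\in\Pi_P$ and $p\in P$ not occurring in $\pi$, $\pi p$ is $\pi$ with $p$ appended; when used as a set, $\pi$ means its set of entries. $\mathbf{X}=\prod_{\pi\in\Pi_L}\mathcal{X}^{CE}_{\pi\cup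 F}$, with elements $\mathbf{x}=[x_\pi]_{\pi\in\Pi_L}$. For $\mathbf{x}\in\mathbf{X}$ and $\pi\in\Pi_L$, $x_\pi$ is stable if $u_p(x_\pi)\ge u_p(x_{\pi p})$ for all $p\in L\setminus\pi$; $\mathbf{x}$ is stable if $x_\varnothing$ is stable, and perfectly stable if $x_\pi$ is stable for every $\pi\in\Pi_L$; $\mathbf{X}^{S}$ and $\mathbf{X}^{PS}$ denote the sets of stable and perfectly stable elements of $\mathbf{X}$. For $\mathbf{X}'\subseteq\mathbf{X}$ and $\pi\in\Pi_L$, $\mathcal{P}_{L\setminus\pi}(\mathbf{X}')$ is the set of Pareto optimal elements of $\{x'_\pi:\mathbf{x}'\in\mathbf{X}'\}$ with respect to the objectives $u_p$, $p\in L\setminus\pi$ (an element $y$ of the set is Pareto optimal if no $y'$ in the set satisfies $u_p(y')\ge u_p(y)$ for all $p\in L\setminus\pi$ with strict inequality for some such $p$). $\mathbf{x}\in\mathbf{X}$ is an SCE if $\mathbf{x}\in\mathbf{X}^S$ and $x_\varnothing\in\mathcal{P}_L(\mathbf{X}^S)$; an SCE-PA if $\mathbf{x}\in\mathbf{X}^{PS}$ and $x_\varnothing\in\mathcal{P}_L(\mathbf{X}^{PS})$; an SCE-PAPE if $\mathbf{x}\in\mathbf{X}^{PS}$ and $x_\pi\in\mathcal{P}_{L\setminus\pi}(\mathbf{X}^{PS})$ for every $\pi\in\Pi_L$. The corresponding sets are $\mathbf{X}^{SCE}$, $\mathbf{X}^{SCE\text{-}PA}$, $\mathbf{X}^{SCE\text{-}PAPE}$.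 *)

From HB Require Import structures.
From mathcomp Require Import all_boot all_order all_algebra.
Set Implicit Arguments. Unset Strict Implicit. Unset Printing Implicit Defensive.
Import Order.TTheory GRing.Theory Num.Theory.
Local Open Scope ring_scope.

Section SG.
Variables (R : realFieldType) (n : nat) (S : 'I_n -> finType).

Definition profile := {dffun forall p : 'I_n, S p}.

Definition dev (s : profile) (p : 'I_n) (b : S p) : profile :=
  [ffun q => dfwith s b q].

Definition distr := {ffun profile -> R}.
Definition is_distr (x : distr) : Prop :=
  (forall s, 0 <= x s) /\ \sum_(s : profile) x s = 1.

Variable u : 'I_n -> profile -> R.

Definition U (p : 'I_n) (x : distr) : R := \sum_(s : profile) x s * u p s.

Definition CE_for (P : {set 'I_n}) (x : distr) : Prop :=
  is_distr x /\
  forall p, p \in P -> forall a b : S p, a != b ->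
    0 <= \sum_(s : profile | s p == a) x s * (u p s - u p (dev s b)).

Variables (L F : {set 'I_n}).

Definition ordsub (pi : seq 'I_n) : bool := uniq pi && all (fun p => p \in L) pi.

(* elements of bold X: families indexed by ordered subsets (values outside
   Pi_L are irrelevant) *)
Definition family := seq 'I_n -> distr.

Definition inX (x : family) : Prop :=
  forall pi, ordsub pi -> CE_for ([set q in pi] :|: F) (x pi).

Definition stable_at (x : family) (pi : seq 'I_n) : Prop :=
  forall p, p \in L -> p \notin pi -> U p (x (rcons pi p)) <= U p (x pi).

Definition XS (x : family) : Prop := inX x /\ stable_at x [::].
Definition XPS (x : family) : Prop :=
  inX x /\ forall pi, ordsub pi -> stable_at x pi.

Definition pareto (Xs : family -> Prop) (pi : seq 'I_n) (y : distr) : Prop :=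
  (exists x', Xs x' /\ x' pi = y) /\
  forall x', Xs x' ->
    ~ ((forall p, p \in L -> p \notin pi -> U p y <= U p (x' pi)) /\
       (exists p, [/\ p \in L, p \notin pi & U p y < U p (x' pi)])).

Definition SCE (x : family) : Prop := XS x /\ pareto XS [::] (x [::]).
Definition SCE_PA (x : family) : Prop := XPS x /\ pareto XPS [::] (x [::]).
Definition SCE_PAPE (x : family) : Prop :=
  XPS x /\ forall pi, ordsub pi -> pareto XPS pi (x pi).

End SG.

From Pilot Require Import Defs.
From HB Require Import structures.
From mathcomp Require Import all_boot all_order all_algebra.
From mathcomp Require Import ring lra.
Set Implicit Arguments. Unset Strict Implicit.
Import Order.TTheory GRing.Theory Num.Theory.
Local Open Scope ring_scope.

(* (1) Every finite game has a correlated equilibrium ce (Hart-Schmeidler):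
       otherwise Ville's alternative, a form of Farkas' lemma, would give
       weights on the unilateral deviations making the expected gain of
       obedience negative at every profile, which fails for the product of
       the stationary distributions of these weights.
   (2) The constant family pi |-> ce is stable, and even perfectly stable.
   (3) The stable and the perfectly stable families form polyhedra: only
       their finitely many entries at ordered subsets of L matter, and all
       constraints are linear.  The leaders' total utility at the root is a
       linear objective, bounded on distributions, so it attains its maximum
       on each polyhedron, and a maximiser is Pareto optimal at the root. *)

Section LinearInequalities.
Context {R : realFieldType}.

Definition delta (K : finType) (k : K) : K -> R := fun k0 => (k == k0)%:R.

Lemma delta_ge0 (K : finType) (k k0 : K) : 0 <= delta k k0.
Proof. exact: ler0n. Qed.

Lemma sum_delta (K : finType) (k : K) (f : K -> R) : \sum_k0 delta k k0 * f k0 = f k.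
Proof.
rewrite (bigD1 k) //= /delta eqxx mul1r big1 ?addr0 // => i /negbTE.
by rewrite eq_sym => ->; rewrite mul0r.
Qed.

Lemma sum_deltaR (K : finType) (k0 : K) (f : K -> R) : \sum_k f k * delta k k0 = f k0.
Proof.
rewrite -(sum_delta k0 f); apply: eq_bigr => k _.
by rewrite mulrC /delta eq_sym.
Qed.

(* Nonnegative combinations of nonnegative combinations are nonnegative
   combinations: the multipliers compose by matrix product. *)
Lemma sum_comb (K K' : finType) (a : K' -> R) (b : K' -> K -> R) (f : K -> R) :
  \sum_k (\sum_k' a k' * b k' k) * f k = \sum_k' a k' * \sum_k b k' k * f k.
Proof.
under eq_bigr do rewrite mulr_suml.
rewrite exchange_big /=; apply: eq_bigr => k' _; rewrite mulr_sumr.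
by apply: eq_bigr => k _; rewrite mulrA.
Qed.

Lemma comb_affine (K I : finType) (mu : K -> R) (c : K -> I -> R) (e : K -> R)
    (v : I -> R) (t : R) :
  \sum_k mu k * (\sum_i c k i * v i + e k * t) =
  \sum_i (\sum_k mu k * c k i) * v i + (\sum_k mu k * e k) * t.
Proof.
rewrite (eq_bigr (fun k => \sum_i mu k * c k i * v i + mu k * e k * t)).
  rewrite big_split /= exchange_big /= mulr_suml.
  by congr (_ + _); apply: eq_bigr => i _; rewrite mulr_suml.
move=> k _; rewrite mulrDr mulr_sumr mulrA; congr (_ + _).
by apply: eq_bigr => i _; rewrite mulrA.
Qed.

Lemma solve_one_var (K : finType) (g r d : K -> R) :
  (forall k, g k = 0 -> d k <= r k) ->
  (forall k l, 0 < g k -> g l < 0 ->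
     - g l * d k + g k * d l <= - g l * r k + g k * r l) ->
  exists z, forall k, d k <= r k + g k * z.
Proof.
move=> zero_rows pair_rows.
pose bnd k := (d k - r k) / g k.
pose upper := \big[Order.min/0]_(l | g l < 0) bnd l.
pose z := \big[Order.max/upper]_(k | 0 < g k) bnd k.
exists z => k; case: (ltrgtP (g k) 0) => gk.
- have : z <= bnd k.
    apply: bigmax_le; first exact: bigmin_le_cond.
    move=> k1 gk1; have := pair_rows k1 k gk1 gk.
    rewrite /bnd ler_pdivrMr // mulrAC ler_ndivlMr //; lra.
  by rewrite /bnd ler_ndivlMr // => h; lra.
- have : bnd k <= z by apply: le_bigmax_cond.
  by rewrite /bnd ler_pdivrMr // => h; lra.
- by rewrite gk mul0r addr0; apply: zero_rows.
Qed.

(* The Fourier-Motzkin combinations eliminating an unknown with coefficients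
   g: every row with g k = 0, and for each pair (k, l) with g k > 0 > g l the
   combination -g l * (row k) + g k * (row l). *)
Definition elim_rows (K : finType) (g : K -> R) (k'' : K + K * K) : K -> R :=
  match k'' with
  | inl k => if g k == 0 then delta k else fun _ => 0
  | inr (k, l) => if (0 < g k) && (g l < 0) then
                    fun k0 => - g l * delta k k0 + g k * delta l k0
                  else fun _ => 0
  end.

Lemma elim_rows_ge0 (K : finType) (g : K -> R) k'' k : 0 <= elim_rows g k'' k.
Proof.
case: k'' => [k1|[k1 l]] /=; first by case: ifP => _ //; apply: delta_ge0.
case: ifP => // /andP[gk gl].
by apply: addr_ge0; apply: mulr_ge0; rewrite ?delta_ge0 ?oppr_ge0 ?ltW.
Qed.

Lemma elim_rows_pair (K : finType) (g : K -> R) k l (f : K -> R) :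
  0 < g k -> g l < 0 ->
  \sum_k0 elim_rows g (inr (k, l)) k0 * f k0 = - g l * f k + g k * f l.
Proof.
move=> gk gl; rewrite /= gk gl /=.
under eq_bigr do rewrite mulrDl -!mulrA.
by rewrite big_split /= -!mulr_sumr !sum_delta.
Qed.

Lemma elim_rows_kill (K : finType) (g : K -> R) k'' :
  \sum_k elim_rows g k'' k * g k = 0.
Proof.
case: k'' => [k|[k l]].
  rewrite /=; case: ifP => [/eqP gk0|_]; first by rewrite sum_delta.
  by rewrite big1 // => i _; rewrite mul0r.
have [/andP[gk gl]|] := boolP ((0 < g k) && (g l < 0)).
  by rewrite elim_rows_pair // mulNr mulrC addNr.
by rewrite /= => /negbTE ->; rewrite big1 // => i _; rewrite mul0r.
Qed.

Lemma elim_rows_solve (K : finType) (g r d : K -> R) :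
  (forall k'', \sum_k elim_rows g k'' k * d k <= \sum_k elim_rows g k'' k * r k) ->
  exists z, forall k, d k <= r k + g k * z.
Proof.
move=> comb; apply: solve_one_var => [k gk0|k l gk gl].
  by have := comb (inl k); rewrite /= gk0 eqxx !sum_delta.
by have := comb (inr (k, l)); rewrite !elim_rows_pair.
Qed.

Lemma sum_split_first (m : nat) (a : 'I_m.+1 -> R) (w : 'I_m -> R) (z : R) :
  \sum_i a i * oapp w z (unlift ord0 i) = a ord0 * z + \sum_j a (lift ord0 j) * w j.
Proof. by rewrite big_ord_recl unlift_none; under eq_bigr do rewrite liftK. Qed.

Theorem fourier_motzkin (m : nat) (K : finType) (c : K -> 'I_m -> R) (e d : K -> R) :
  exists N (mu : 'I_N -> K -> R),
   [/\ forall j k, 0 <= mu j k, forall j i, \sum_k mu j k * c k i = 0 &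
   forall t, (forall j, \sum_k mu j k * d k <= (\sum_k mu j k * e k) * t) ->
     exists v : 'I_m -> R, forall k, d k <= \sum_i c k i * v i + e k * t].
Proof.
elim: m K c e d => [|m IH] K c e d.
  exists #|K|, (fun j => delta (enum_val j)); split.
  - by move=> j k; apply: delta_ge0.
  - by move=> j [].
  move=> t H; exists (fun _ => 0) => k; rewrite big_ord0 add0r.
  by have := H (enum_rank k); rewrite !sum_delta enum_rankK.
pose g k := c k ord0.
pose mus := elim_rows g.
pose comb (f : K -> R) k'' := \sum_k mus k'' k * f k.
have [N [mu [mu0 muc mut]]] :=
  IH _ (fun k'' j => comb (c^~ (lift ord0 j)) k'') (comb e) (comb d).
exists N, (fun j k => \sum_k'' mu j k'' * mus k'' k); split.
- by move=> j k; apply: sumr_ge0 => k'' _; apply: mulr_ge0 => //; apply: elim_rows_ge0.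
- move=> j i; rewrite sum_comb; case: (unliftP ord0 i) => [i' ->|->].
    exact: muc.
  by rewrite big1 // => k'' _; rewrite elim_rows_kill mulr0.
move=> t H.
have [w Hw] : exists w, forall k'',
    comb d k'' <= \sum_i comb (c^~ (lift ord0 i)) k'' * w i + comb e k'' * t.
  by apply: mut => j; have := H j; rewrite !sum_comb.
pose r k := \sum_i c k (lift ord0 i) * w i + e k * t.
have [z Hz] : exists z, forall k, d k <= r k + g k * z.
  by apply: elim_rows_solve => k''; have := Hw k''; rewrite /r comb_affine.
exists (fun i => oapp w z (unlift ord0 i)) => k.
by rewrite sum_split_first; have := Hz k; rewrite /r /g; lra.
Qed.

Lemma comb_sound (I K : finType) (c : K -> I -> R) (e d : K -> R)
    (mu : K -> R) (t : R) (v : I -> R) :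
  (forall k, 0 <= mu k) -> (forall i, \sum_k mu k * c k i = 0) ->
  (forall k, d k <= \sum_i c k i * v i + e k * t) ->
  \sum_k mu k * d k <= (\sum_k mu k * e k) * t.
Proof.
move=> mu0 muc hv.
have -> : (\sum_k mu k * e k) * t = \sum_k mu k * (\sum_i c k i * v i + e k * t).
  by rewrite comb_affine [X in X + _]big1 ?add0r // => i _; rewrite muc mul0r.
by apply: ler_sum => k _; apply: ler_wpM2l.
Qed.

Corollary fourier_motzkin_fin (I K : finType) (c : K -> I -> R) (e d : K -> R) :
  exists N (mu : 'I_N -> K -> R),
   [/\ forall j k, 0 <= mu j k, forall j i, \sum_k mu j k * c k i = 0 &
   forall t, (forall j, \sum_k mu j k * d k <= (\sum_k mu j k * e k) * t) ->
     exists v : I -> R, forall k, d k <= \sum_i c k i * v i + e k * t].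
Proof.
have [N [mu [mu0 muc mut]]] := fourier_motzkin (fun k (j : 'I_#|I|) => c k (enum_val j)) e d.
exists N, mu; split => // [j i|t /mut [v hv]].
  by rewrite -(enum_rankK i); apply: muc.
exists (fun i => v (enum_rank i)) => k.
rewrite (big_enum_val (fun i => c k i * v (enum_rank i))) /=.
by under eq_bigr do rewrite enum_valK; apply: hv.
Qed.

Theorem farkas (V K : finType) (c : K -> V -> R) (d : K -> R) :
  (exists v : V -> R, forall k, d k <= \sum_x c k x * v x) \/
  (exists y : K -> R, [/\ forall k, 0 <= y k, forall x, \sum_k y k * c k x = 0
      & 0 < \sum_k y k * d k]).
Proof.
have [N [mu [mu0 muc mut]]] := fourier_motzkin_fin c (fun _ => 0) d.
have [/forallP H|/forallPn [j Hj]] := boolP [forall j, \sum_k mu j k * d k <= 0].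
  left; have [|v hv] := mut 0; first by move=> j; rewrite mulr0; apply: H.
  by exists v => k; have := hv k; rewrite mulr0 addr0.
by right; exists (mu j); split => //; rewrite ltNge.
Qed.

(* The sign encoding an equation as a pair of inequalities. *)
Definition sgn (b : bool) : R := if b then 1 else -1.

Corollary farkas_distr (V K : finType) (c : K -> V -> R) :
  (exists v : V -> R, [/\ forall x, 0 <= v x, \sum_x v x = 1 &
       forall k, 0 <= \sum_x c k x * v x]) \/
  (exists y : K -> R, (forall k, 0 <= y k) /\ forall x, \sum_k y k * c k x < 0).
Proof.
pose c' (k : V + (bool + K)) x :=
  match k with inl x0 => delta x0 x | inr (inl b) => sgn b | inr (inr k) => c k x end.
pose d' (k : V + (bool + K)) := if k is inr (inl b) then sgn b else 0.
have [[v hv]|[y [y0 yc yd]]] := farkas c' d'.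
  left; exists v; split=> [x||k]; last exact: hv (inr (inr k)).
    by have := hv (inl x); rewrite sum_delta.
  have := hv (inr (inl true)); have := hv (inr (inl false)).
  by rewrite /= -!mulr_sumr; lra.
right; exists (fun k => y (inr (inr k))); split=> [k|x]; first exact: y0.
have := yc x; have := y0 (inl x).
move: yd; rewrite !big_sumType !big_bool /= sum_deltaR.
rewrite big1 => [|x0 _]; last by rewrite mulr0.
rewrite big1 => [|k _]; last by rewrite mulr0.
lra.
Qed.

Lemma max_one_var (J : finType) (a b : J -> R) (t0 M : R) :
  (forall j, b j <= a j * t0) ->
  (forall t, (forall j, b j <= a j * t) -> t <= M) ->
  exists2 ts, (forall j, b j <= a j * ts) &
              forall t, (forall j, b j <= a j * t) -> t <= ts.
Proof.
move=> feas0 bounded.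
have [/existsP [j0 aj0]|/existsPn nonneg] := boolP [exists j, a j < 0]; last first.
  have feas1 : forall j, b j <= a j * Num.max t0 (M + 1).
    move=> j; apply: le_trans (feas0 j) _; apply: ler_wpM2l.
      by rewrite leNgt nonneg.
    by rewrite le_max lexx.
  by have := bounded _ feas1; rewrite ge_max => /andP[_]; lra.
pose ts := \big[Order.min/(b j0 / a j0)]_(j | a j < 0) (b j / a j).
have below t : (forall j, b j <= a j * t) -> t <= ts.
  move=> ht; apply: le_bigmin => [|j aj]; rewrite ler_ndivlMr // mulrC; exact: ht.
exists ts => // j; case: (ltrgtP (a j) 0) => aj.
- by rewrite mulrC -ler_ndivlMr //; apply: bigmin_le_cond.
- by apply: le_trans (feas0 j) _; rewrite ler_pM2l // below.
- by have := feas0 j; rewrite aj !mul0r.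
Qed.

(* Fourier-Motzkin elimination of
   the unknowns from  { t <= f . v, v feasible }  reduces this to
   max_one_var. *)
Theorem lp_max (V K : finType) (c : K -> V -> R) (d : K -> R) (f : V -> R)
    (v0 : V -> R) (M : R) :
  let feasible v := forall k, d k <= \sum_x c k x * v x in
  feasible v0 -> (forall v, feasible v -> \sum_x f x * v x <= M) ->
  exists2 v, feasible v & forall v', feasible v' -> \sum_x f x * v' x <= \sum_x f x * v x.
Proof.
move=> feasible feas0 bounded.
pose obj v := \sum_x f x * v x.
pose c' (k : K + unit) x := if k is inl k then c k x else f x.
pose e' (k : K + unit) : R := if k is inl _ then 0 else -1.
pose d' (k : K + unit) : R := if k is inl k then d k else 0.
have [N [mu [mu0 muc mut]]] := fourier_motzkin_fin c' e' d'.
pose a j := \sum_k mu j k * e' k.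
pose b j := \sum_k mu j k * d' k.
have value_sound v t : feasible v -> t <= obj v -> forall j, b j <= a j * t.
  move=> fv tv j; apply: (comb_sound (t := t) (v := v) (mu0 j) (muc j)).
  by case=> [k|[]] /=; [rewrite mul0r addr0; apply: fv | move: tv; rewrite /obj; lra].
have value_complete t : (forall j, b j <= a j * t) -> exists2 v, feasible v & t <= obj v.
  move=> /mut [v hv]; exists v => [k|]; first by have := hv (inl k); rewrite /= mul0r addr0.
  by have := hv (inr tt); rewrite /obj /=; lra.
have [ts feas_ts max_ts] : exists2 ts, (forall j, b j <= a j * ts) &
    forall t, (forall j, b j <= a j * t) -> t <= ts.
  apply: (max_one_var (t0 := obj v0) (M := M)); first exact: value_sound.
  by move=> t /value_complete [v fv tv]; apply: le_trans tv (bounded v fv).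
have [v fv tsv] := value_complete _ feas_ts.
exists v => // v' fv'; apply: le_trans tsv.
by apply: max_ts; apply: value_sound fv' (lexx _).
Qed.

(* If not, Ville's
   alternative yields weights y, and the state minimising y gives a
   contradiction. *)
Lemma stationary (T : finType) (t0 : T) (lam : T -> T -> R) :
  (forall a b, 0 <= lam a b) ->
  exists sg : T -> R, [/\ forall a, 0 <= sg a, \sum_a sg a = 1 &
    forall a, \sum_b sg b * lam b a = sg a * \sum_b lam a b].
Proof.
move=> lam0; pose out a := \sum_b lam a b.
pose c a x := lam x a - delta a x * out a.
have flow v a : \sum_x c a x * v x = \sum_b v b * lam b a - v a * out a.
  under eq_bigr do rewrite mulrBl -mulrA [lam _ _ * _]mulrC.
  by rewrite sumrB sum_delta mulrC.
have [[v [v0 v1 vc]]|[y [y0 yc]]] := farkas_distr c.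
  exists v; split => // a; apply/eqP; rewrite -subr_eq0 -flow.
  have net : \sum_a \sum_x c a x * v x = 0.
    under eq_bigr do rewrite flow.
    rewrite sumrB exchange_big /=; apply/eqP; rewrite subr_eq0; apply/eqP.
    by apply: eq_bigr => b _; rewrite /out mulr_sumr.
  by rewrite (psumr_eq0P (fun a _ => vc a) net).
have [x0 _ ymin] := @arg_minP _ _ T t0 predT y isT.
suff : 0 <= \sum_a y a * c a x0 by rewrite leNgt yc.
have -> : \sum_a y a * c a x0 = \sum_a lam x0 a * (y a - y x0).
  rewrite /c; under eq_bigr do rewrite mulrBr mulrA mulrAC.
  rewrite sumrB sum_deltaR /out mulr_sumr -sumrB.
  by apply: eq_bigr => a _; rewrite mulrBr ![lam x0 a * _]mulrC.
by apply: sumr_ge0 => a _; rewrite mulr_ge0 // subr_ge0 ymin.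
Qed.

Lemma stationary_balance (T : finType) (lam : T -> T -> R) (sg G : T -> R) :
  (forall a, \sum_b sg b * lam b a = sg a * \sum_b lam a b) ->
  \sum_a \sum_b lam a b * (sg a * (G a - G b)) = 0.
Proof.
move=> st.
rewrite (eq_bigr (fun a => sg a * (\sum_b lam a b) * G a - \sum_b sg a * lam a b * G b)).
  rewrite sumrB exchange_big /= [X in _ - X](eq_bigr (fun b => sg b * (\sum_a lam b a) * G b)).
    by rewrite subrr.
  by move=> b _; rewrite -mulr_suml st.
by move=> a _; rewrite mulr_sumr mulr_suml -sumrB; apply: eq_bigr => b _; ring.
Qed.

Lemma distr_has_pos (T : finType) (v : T -> R) :
  (forall a, 0 <= v a) -> \sum_a v a = 1 -> exists a, 0 < v a.
Proof.
move=> v0 v1; have [/existsP //|/existsPn vle0] := boolP [exists a, 0 < v a].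
suff : \sum_a v a = 0 by rewrite v1 => /eqP; rewrite oner_eq0.
by apply: big1 => a _; apply/eqP; rewrite eq_le v0 andbT leNgt vle0.
Qed.

Lemma weighted_sum_neg (T : finType) (C v : T -> R) (a0 : T) :
  (forall a, C a < 0) -> (forall a, 0 <= v a) -> 0 < v a0 ->
  \sum_a C a * v a < 0.
Proof.
move=> Cneg v0 va0; rewrite (bigD1 a0) //=.
have : \sum_(a | a != a0) C a * v a <= 0.
  by apply: sumr_le0 => a _; rewrite mulr_le0_ge0 // ltW.
have : C a0 * v a0 < 0 by rewrite pmulr_llt0.
lra.
Qed.

End LinearInequalities.

Section Deviations.
Variables (R : realFieldType) (n : nat) (S : 'I_n -> finType).
Variable u : 'I_n -> profile S -> R.

(* A unilateral deviation: player p, recommended a, plays b instead. *)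
Definition deviation := {p : 'I_n & (S p * S p)%type}.
Definition deviate (p : 'I_n) (a b : S p) : deviation :=
  Tagged (fun p => (S p * S p)%type) (a, b).

Definition gain (t : deviation) (s : profile S) : R :=
  let: existT p (a, b) := t in if s p == a then u p s - u p (dev s b) else 0.

Lemma sum_gain (p : 'I_n) (a b : S p) (x : profile S -> R) :
  \sum_s gain (deviate a b) s * x s = \sum_(s : profile S | s p == a) x s * (u p s - u p (dev s b)).
Proof.
rewrite [RHS]big_mkcond; apply: eq_bigr => s _ /=.
by case: ifP; rewrite ?mul0r // mulrC.
Qed.

Lemma CE_forP (P : {set 'I_n}) (x : distr R S) :
  CE_for u P x <-> is_distr x /\
    forall p (a b : S p), p \in P -> a != b -> 0 <= \sum_s gain (deviate a b) s * x s.
Proof.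
rewrite /CE_for; split=> -[hx hP]; split=> //.
  by move=> p a b hp hab; rewrite sum_gain; apply: hP.
by move=> p hp a b hab; rewrite -sum_gain; apply: hP.
Qed.

Lemma dev_at (s : profile S) (p : 'I_n) (b : S p) : dev s b p = b.
Proof. by rewrite /dev ffunE dfwith_in. Qed.

Lemma dev_out (s : profile S) (p q : 'I_n) (b : S p) : p != q -> dev s b q = s q.
Proof. by move=> hpq; rewrite /dev ffunE dfwith_out. Qed.

Lemma dev_dev (s : profile S) (p : 'I_n) (a b : S p) : dev (dev s b) a = dev s a.
Proof.
apply/ffunP => q; case: (eqVneq p q) => [<-|hpq]; first by rewrite !dev_at.
by rewrite !dev_out.
Qed.

Lemma dev_eq (s : profile S) (p : 'I_n) (a : S p) : (dev s a == s) = (s p == a).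
Proof.
apply/eqP/eqP => [<-|hs]; first by rewrite dev_at.
apply/ffunP => q; case: (eqVneq p q) => [<-|hpq]; first by rewrite dev_at.
by rewrite dev_out.
Qed.

Section ProductDistribution.
Variable sg : forall p, S p -> R.
Arguments sg : clear implicits.

Definition prod_distr (s : profile S) : R := \prod_p sg p (s p).

Definition payoff_against (p : 'I_n) (c : S p) : R :=
  \sum_(s : profile S | s p == c) (\prod_(q | q != p) sg q (s q)) * u p s.

(* Switching p's strategy from a to b is a bijection between the profiles
   where p plays a and those where p plays b, leaving the others untouched. *)
Lemma payoff_against_dev (p : 'I_n) (a b : S p) :
  \sum_(s : profile S | s p == a) (\prod_(q | q != p) sg q (s q)) * u p (dev s b) =
  payoff_against b.
Proof.
rewrite /payoff_against [RHS](reindex_onto (fun s => dev s b) (fun s => dev s a)) /=;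
  last by move=> s /eqP hs; rewrite dev_dev; apply/eqP; rewrite dev_eq hs.
apply: eq_big => [s|s _]; first by rewrite dev_at eqxx dev_dev dev_eq.
by congr (_ * _); apply: eq_bigr => q hq; rewrite dev_out // eq_sym.
Qed.

Lemma product_gain (p : 'I_n) (a b : S p) :
  \sum_s gain (deviate a b) s * prod_distr s =
  sg p a * (payoff_against a - payoff_against b).
Proof.
rewrite sum_gain -(payoff_against_dev a b) /payoff_against mulrBr !mulr_sumr -sumrB.
apply: eq_bigr => s /eqP hs; rewrite /prod_distr (bigD1 p) //= hs; ring.
Qed.

End ProductDistribution.

(* If the
   incentive constraints had no solution, Ville's alternative would give
   deviation weights y making the weighted gain negative at every profile;
   but the product of the stationary distributions of the matrices y
   (one per player) has weighted gain zero. *)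
Theorem ce_exists : (forall p, (0 < #|S p|)%N) -> exists x : distr R S, CE_for u [set: 'I_n] x.
Proof.
move=> hS; have [[v [v0 v1 vc]]|[y [y0 yneg]]] := farkas_distr gain.
  exists [ffun s => v s]; apply/CE_forP; split=> [|p a b _ _].
    by split=> [s|]; rewrite ?ffunE //; under eq_bigr do rewrite ffunE.
  by under eq_bigr do rewrite ffunE; apply: vc.
have [sg sgP] := fin_all_exists (fun p =>
  stationary (enum_val (Ordinal (hS p))) (fun a b : S p => y0 (deviate a b))).
have sg_ge0 p a : 0 <= sg p a by case: (sgP p).
have sg_sum1 p : \sum_a sg p a = 1 by case: (sgP p).
have [s0 pos_s0] := fin_all_exists (fun p => distr_has_pos (sg_ge0 p) (sg_sum1 p)).
have weighted_gain_neg : \sum_s (\sum_t y t * gain t s) * prod_distr sg s < 0.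
  apply: (weighted_sum_neg (a0 := [ffun p => s0 p] : profile S)) => // [s|].
    by apply: prodr_ge0 => p _.
  by apply: prodr_gt0 => p _; rewrite ffunE.
suff weighted_gain_zero : \sum_s (\sum_t y t * gain t s) * prod_distr sg s = 0.
  by rewrite weighted_gain_zero ltxx in weighted_gain_neg.
rewrite sum_comb.
have -> : \sum_t y t * \sum_s gain t s * prod_distr sg s = \sum_p \sum_(ab : S p * S p)
    y (deviate ab.1 ab.2) * \sum_s gain (deviate ab.1 ab.2) s * prod_distr sg s.
  by rewrite (sig_big_dep xpredT (fun _ => xpredT)) /=; apply: eq_bigr => -[p [a b]].
apply: big1 => p _.
rewrite -(pair_big xpredT xpredT
  (fun a b => y (deviate a b) * \sum_s gain (deviate a b) s * prod_distr sg s)) /=.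
under eq_bigr do under eq_bigr do rewrite product_gain.
by case: (sgP p) => _ _; apply: stationary_balance.
Qed.

Lemma utility_sum_le (P : {set 'I_n}) (x : distr R S) :
  is_distr x -> \sum_(p in P) U u p x <= \sum_s `|\sum_(p in P) u p s|.
Proof.
case=> x0 x1; pose B := \sum_s `|\sum_(p in P) u p s|.
have -> : \sum_(p in P) U u p x = \sum_s x s * \sum_(p in P) u p s.
  by rewrite /U exchange_big /=; apply: eq_bigr => s _; rewrite mulr_sumr.
apply: (@le_trans _ _ (\sum_s x s * B)); last by rewrite -mulr_suml x1 mul1r.
apply: ler_sum => s _; apply: ler_wpM2l => //; apply: le_trans (ler_norm _) _.
by rewrite /B (bigD1 s) //= lerDl sumr_ge0.
Qed.

End Deviations.

Section StableFamilies.
Variables (R : realFieldType) (n : nat) (S : 'I_n -> finType).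
Variable u : 'I_n -> profile S -> R.
Variables (L F : {set 'I_n}).

Definition leaders_welfare (pi : seq 'I_n) (y : distr R S) : R :=
  \sum_(p in L | p \notin pi) U u p y.

(* A family maximising the leaders' welfare at pi over Xs is Pareto optimal
   at pi: a Pareto improvement would increase the welfare. *)
Lemma pareto_of_max (Xs : Defs.family R S -> Prop) (pi : seq 'I_n) (x : Defs.family R S) :
  Xs x -> (forall x', Xs x' -> leaders_welfare pi (x' pi) <= leaders_welfare pi (x pi)) ->
  pareto u L Xs pi (x pi).
Proof.
move=> hx xmax; split; first by exists x.
move=> x' /xmax; rewrite /leaders_welfare => le_welfare [weak [p [pL ppi lt_p]]].
have hp : (p \in L) && (p \notin pi) by rewrite pL.
move: le_welfare; rewrite (bigD1 p hp) [X in _ <= X](bigD1 p hp) /=.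
have : \sum_(q | (q \in L) && (q \notin pi) && (q != p)) U u q (x pi) <=
       \sum_(q | (q \in L) && (q \notin pi) && (q != p)) U u q (x' pi).
  by apply: ler_sum => q /andP[/andP[qL qpi] _]; apply: weak.
lra.
Qed.

Lemma ordsub_rcons (pi : seq 'I_n) (p : 'I_n) :
  ordsub L pi -> p \in L -> p \notin pi -> ordsub L (rcons pi p).
Proof.
rewrite /ordsub rcons_uniq all_rcons => /andP[hu ha] hp hnp.
by rewrite hnp hu hp ha.
Qed.

(* Families that are correlated equilibria of the right subgames everywhere
   and stable at the ordered subsets selected by Q: XS is the case
   Q = [::], and XPS the case where Q selects every ordered subset. *)
Definition stable_on (Q : pred (seq 'I_n)) (x : Defs.family R S) : Prop :=
  inX u L F x /\ forall pi, ordsub L pi -> Q pi -> stable_at u L x pi.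

Lemma stable_on_nil (x : Defs.family R S) : stable_on (pred1 [::]) x <-> XS u L F x.
Proof.
split=> -[hin hst]; split=> //; first exact: (hst [::]).
by move=> pi _ /eqP ->.
Qed.

Lemma stable_on_all (x : Defs.family R S) : stable_on predT x <-> XPS u L F x.
Proof.
split=> -[hin hst]; split=> // pi hpi; first exact: hst.
by move=> _; apply: hst.
Qed.

Lemma stable_on_ext (Q : pred (seq 'I_n)) (x x' : Defs.family R S) :
  (forall pi, ordsub L pi -> x pi = x' pi) -> stable_on Q x -> stable_on Q x'.
Proof.
move=> eqx [hin hst]; split=> [pi hpi|pi hpi hQ p pL ppi]; first by rewrite -eqx //; apply: hin.
by rewrite -!eqx ?ordsub_rcons //; apply: hst.
Qed.

End StableFamilies.

Section LinearProgram.
Variables (R : realFieldType) (n : nat) (S : 'I_n -> finType).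
Variable u : 'I_n -> profile S -> R.
Variables (L F : {set 'I_n}) (Q : pred (seq 'I_n)).

Fixpoint seqs (k : nat) : seq (seq 'I_n) :=
  if k is k'.+1 then [::] :: [seq i :: s | i <- enum 'I_n, s <- seqs k'] else [:: [::]].

Lemma mem_seqs (k : nat) (s : seq 'I_n) : (size s <= k)%N -> s \in seqs k.
Proof.
elim: k s => [|k IH] [|i s] //= hs; rewrite inE; apply/orP; right.
by apply: (allpairs_f (fun i s => i :: s)); rewrite ?mem_enum // IH.
Qed.

(* A finite type of indices containing every ordered subset of L. *)
Definition ordsub_index := seq_sub (seqs n).
Definition idx (pi : seq 'I_n) : ordsub_index :=
  insubd (SeqSub (mem_seqs (s := [::]) (leq0n n))) pi.

Lemma idxK (pi : seq 'I_n) : ordsub L pi -> val (idx pi) = pi.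
Proof.
case/andP => hu _; apply/insubdK/mem_seqs.
by rewrite -(card_uniqP hu); apply: leq_trans (max_card _) _; rewrite card_ord.
Qed.

(* The unknowns of the program are the entries x_pi(s) of a family. *)
Definition unknown := (ordsub_index * profile S)%type.
Definition fam (v : unknown -> R) : Defs.family R S := fun pi => [ffun s => v (idx pi, s)].
Definition enc (x : Defs.family R S) : unknown -> R := fun js => x (val js.1) js.2.

Lemma fam_idx (v : unknown -> R) (pi : seq 'I_n) : fam v (val (idx pi)) = fam v pi.
Proof. by apply/ffunP => s; rewrite !ffunE /idx valKd. Qed.

Lemma fam_enc (x : Defs.family R S) (pi : seq 'I_n) :
  ordsub L pi -> fam (enc x) pi = x pi.
Proof. by move=> hpi; apply/ffunP => s; rewrite ffunE /enc /= idxK. Qed.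

(* The kinds of constraints attached to an index pi: nonnegativity of one
   entry, total mass >= 1 or <= 1, one incentive constraint, and stability
   against one leader joining. *)
Definition kind := (profile S + (bool + (deviation S + 'I_n)))%type.

Definition relevant (i : ordsub_index) (c : kind) : bool :=
  ordsub L (val i) &&
  match c with
  | inr (inr (inl (existT p (a, b)))) => (p \in [set q in val i] :|: F) && (a != b)
  | inr (inr (inr p)) => [&& Q (val i), p \in L & p \notin val i]
  | _ => true
  end.

Definition row_value (x : Defs.family R S) (i : ordsub_index) (c : kind) : R :=
  let pi := val i in
  match c with
  | inl s => x pi s
  | inr (inl b) => sgn b * \sum_s x pi s
  | inr (inr (inl t)) => \sum_s gain u t s * x pi s
  | inr (inr (inr p)) => U u p (x pi) - U u p (x (rcons pi p))
  end.

Definition row_bound (c : kind) : R := if c is inr (inl b) then sgn b else 0.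

Lemma stable_on_rows (x : Defs.family R S) :
  stable_on u L F Q x -> forall i c, relevant i c -> row_bound c <= row_value x i c.
Proof.
move=> [hin hst] i c /andP[hpi hc]; have /CE_forP [[x0 x1] hce] := hin _ hpi.
case: c hc => [s|[b|[[p [a b]]|p]]] //= hc.
- by rewrite x1 mulr1.
- by case/andP: hc => hp hab; apply: hce.
- by case/and3P: hc => hQ hp hnp; rewrite subr_ge0; apply: hst.
Qed.

Lemma rows_stable_on (x : Defs.family R S) :
  (forall i c, relevant i c -> row_bound c <= row_value x i c) -> stable_on u L F Q x.
Proof.
move=> rows; split=> [pi hpi|pi hpi hQ p hp hnp].
  have row c : relevant (idx pi) c -> row_bound c <= row_value x (idx pi) c.
    exact: rows.
  rewrite /relevant /row_value idxK // hpi in row.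
  apply/CE_forP; split; first split.
  - by move=> s; apply: (row (inl s)).
  - by have := row (inr (inl true)) isT; have := row (inr (inl false)) isT; rewrite /=; lra.
  - by move=> q a b hq hab; apply: (row (inr (inr (inl (deviate a b))))); rewrite /= hq.
have := rows (idx pi) (inr (inr (inr p))); rewrite /relevant /= idxK // hpi hQ hp hnp.
by rewrite subr_ge0; apply.
Qed.

Definition coef (i : ordsub_index) (g : profile S -> R) : unknown -> R :=
  fun js => delta i js.1 * g js.2.

Lemma sum_coef (i : ordsub_index) (g : profile S -> R) (v : unknown -> R) :
  \sum_js coef i g js * v js = \sum_s g s * fam v (val i) s.
Proof.
have -> : \sum_js coef i g js * v js = \sum_j \sum_s delta i j * (g s * v (j, s)).
  by rewrite pair_bigA; apply: eq_bigr => -[j s] _; rewrite /coef mulrA.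
under eq_bigr do rewrite -mulr_sumr.
by rewrite sum_delta; apply: eq_bigr => s _; rewrite ffunE /idx valKd.
Qed.

Definition row_coef (k : ordsub_index * kind) : unknown -> R :=
  let: (i, c) := k in
  match c with
  | inl s => coef i (delta s)
  | inr (inl b) => coef i (fun=> sgn b)
  | inr (inr (inl t)) => coef i (gain u t)
  | inr (inr (inr p)) => fun js => coef i (u p) js - coef (idx (rcons (val i) p)) (u p) js
  end.

Lemma row_coefE (i : ordsub_index) (c : kind) (v : unknown -> R) :
  \sum_js row_coef (i, c) js * v js = row_value (fam v) i c.
Proof.
have swapU p pi : \sum_s u p s * fam v pi s = U u p (fam v pi).
  by apply: eq_bigr => s _; rewrite mulrC.
case: c => [s|[b|[t|p]]] /=; rewrite ?sum_coef //.
- by rewrite sum_delta.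
- by rewrite mulr_sumr.
under eq_bigr do rewrite mulrBl.
by rewrite sumrB !sum_coef fam_idx !swapU.
Qed.

Definition feasible (v : unknown -> R) : Prop :=
  forall k : {k : ordsub_index * kind | relevant k.1 k.2},
    row_bound (val k).2 <= \sum_js row_coef (val k) js * v js.

Lemma feasible_fam (v : unknown -> R) : feasible v -> stable_on u L F Q (fam v).
Proof.
move=> fv; apply: rows_stable_on => i c hic.
by rewrite -row_coefE; apply: (fv (exist _ (i, c) hic)).
Qed.

Lemma feasible_enc (x : Defs.family R S) : stable_on u L F Q x -> feasible (enc x).
Proof.
move=> hx [[i c] /= hic]; rewrite row_coefE.
apply: stable_on_rows hic; apply: stable_on_ext hx => pi hpi.
by rewrite fam_enc.
Qed.

(* If some family is stable on Q, one of them maximises the leaders'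
   welfare at the root: this is a bounded linear program. *)
Lemma stable_on_max (x0 : Defs.family R S) : stable_on u L F Q x0 ->
  exists2 x, stable_on u L F Q x & forall x', stable_on u L F Q x' ->
    leaders_welfare u L [::] (x' [::]) <= leaders_welfare u L [::] (x [::]).
Proof.
move=> hx0.
have welfareE y : leaders_welfare u L [::] y = \sum_(p in L) U u p y.
  by apply: eq_bigl => p; rewrite andbT.
pose obj := coef (idx [::]) (fun s => \sum_(p in L) u p s).
have objE v : \sum_js obj js * v js = leaders_welfare u L [::] (fam v [::]).
  rewrite sum_coef welfareE /U exchange_big /=; apply: eq_bigr => s _.
  by rewrite mulr_suml; apply: eq_bigr => p _; rewrite mulrC idxK.
have bounded v : feasible v -> \sum_js obj js * v js <= \sum_s `|\sum_(p in L) u p s|.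
  move=> /feasible_fam [hin _]; have [hd _] := hin [::] isT.
  by rewrite objE welfareE; apply: utility_sum_le.
have [v fv vmax] := lp_max (c := fun k => row_coef (val k)) (d := fun k => row_bound (val k).2)
  (feasible_enc hx0) bounded.
exists (fam v); first exact: feasible_fam.
by move=> x' /feasible_enc /vmax; rewrite !objE fam_enc.
Qed.

End LinearProgram.

(* The constant family at a correlated equilibrium is perfectly stable, so
   maximising the leaders' welfare over the stable, resp. perfectly stable,
   families yields an SCE, resp. an SCE-PA. *)
Theorem theorem1 (R : realFieldType) (n : nat) (S : 'I_n -> finType)
  (hS : forall p, (0 < #|S p|)%N)
  (u : 'I_n -> profile S -> R) (L F : {set 'I_n})
  (hLF : L :|: F = [set: 'I_n]) (hLF' : L :&: F = set0) :
  (exists x, SCE u L F x) /\ (exists x, SCE_PA u L F x).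
Proof.
have [ce [ce_distr ce_incentives]] := ce_exists u hS.
have const_ce Q : stable_on u L F Q (fun _ => ce).
  split=> [pi _|pi _ _ p _ _]; last exact: lexx.
  by split=> // p _; apply: ce_incentives; rewrite in_setT.
have [xs xs_stable xs_max] := stable_on_max (const_ce (pred1 [::])).
have [xp xp_stable xp_max] := stable_on_max (const_ce predT).
split; [exists xs | exists xp]; split.
- exact/stable_on_nil.
- apply: pareto_of_max => [|x' /stable_on_nil]; [exact/stable_on_nil | exact: xs_max].
- exact/stable_on_all.
- apply: pareto_of_max => [|x' /stable_on_all]; [exact/stable_on_all | exact: xp_max].
Qed.
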